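(* Let $a,b\in\mathbb{Q}$ be such that $f(x)=x^{12}+ax^6+b$ is irreducible over $\mathbb{Q}$. Let $G_4$ be the Galois group of $x^4+ax^2+b$ and $G_6$ the Galois group of $x^6+ax^3+b$ over $\mathbb{Q}$. Then $(G_4,G_6)\notin\{(4T1,6T1),(4T1,6T2),(4T1,6T5)\}$.
   Context: Galois groups are regarded as transitive permutation groups on the roots up to conjugacy; $nTj$ denotes the $j$-th conjugacy class of transitive subgroups of $S_n$ in the Butler–McKay numbering (so $4T1=C_4$, $6T1=C_6$, $6T2=S_3$ acting regularly, $6T5=C_3\times S_3$). *)

From HB Require Import structures.
From mathcomp Require Import all_boot all_order all_algebra all_fingroup all_solvable all_field.
Set Implicit Arguments. Unset Strict Implicit. Unset Printing Implicit Defensive.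
Import GRing.Theory.
Local Open Scope ring_scope.

(* The permutation s : 'S_n.+1 of {0,..,n} given by the list l of images
   (i |-> l`_i); the identity if l does not describe a permutation. *)
Definition lperm (n : nat) (l : seq nat) : 'S_n.+1 :=
  insubd (1%g : 'S_n.+1) [ffun i : 'I_n.+1 => (inord (nth 0%N l i) : 'I_n.+1)].

(* Galois group of E/Q, viewed as a permutation group on the labelled roots rs:
   the set of permutations s such that some g in Gal(E/Q) maps rs_i to rs_(s i). *)
Definition galPerm (L : splittingFieldType rat) (E : {subfield L}) (n : nat)
    (rs : n.-tuple L) : {set 'S_n} :=
  [set s : 'S_n | [exists g in ('Gal(E / 1%VS))%g,
                    [forall i : 'I_n, g (tnth rs i) == tnth rs (s i)]]].

Definition conjS (n : nat) (G T : {set 'S_n}) : Prop :=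
  exists x : 'S_n, (G :^ x)%g = T.

(* Representatives (points labelled 0..n-1) of the Butler-McKay classes. *)
Definition T4_1 : {set 'S_4} := <[lperm 3 [:: 1; 2; 3; 0]%N]>%g.
Definition T6_1 : {set 'S_6} := <[lperm 5 [:: 1; 2; 3; 4; 5; 0]%N]>%g.
(* 6T2 = S3 regular : <(0 2 4)(1 5 3), (0 1)(2 3)(4 5)> *)
Definition T6_2 : {set 'S_6} :=
  <<[set lperm 5 [:: 2; 5; 4; 1; 0; 3]%N; lperm 5 [:: 1; 0; 3; 2; 5; 4]%N]>>%g.
(* 6T5 = C3 x S3 = 3 wr 2 : <(0 2 4), (1 3 5), (0 1)(2 3)(4 5)> *)
Definition T6_5 : {set 'S_6} :=
  <<[set lperm 5 [:: 2; 1; 4; 3; 0; 5]%N; lperm 5 [:: 0; 3; 2; 5; 4; 1]%N;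
         lperm 5 [:: 1; 0; 3; 2; 5; 4]%N]>>%g.

Definition roots_of (L : splittingFieldType rat) (p : {poly rat}) (n : nat)
    (rs : n.-tuple L) : Prop :=
  uniq rs /\ map_poly (in_alg L) p = \prod_(z <- rs) ('X - z%:P).

From HB Require Import structures.
From mathcomp Require Import all_boot all_order all_algebra all_fingroup all_solvable all_field.
From mathcomp Require Import ring lra.
Import Order.TTheory GRing.Theory Num.Theory.
Local Open Scope ring_scope.
Set Implicit Arguments. Unset Strict Implicit. Unset Printing Implicit Defensive.

(* Call a group square-covered if it is the union of the squares k^2 and of
   one translate h k^2 of them; 4T1, 6T1, 6T2 and 6T5 all are.  In a Galois
   extension with such a group, every automorphism acts on the square roots of
   base-field elements either trivially or as h does, so the product of two
   such square roots outside the base field lies in it.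
   The splitting field of x^6 + a x^3 + b contains sqrt(-3) and sqrt(d),
   d = a^2 - 4b, which is irrational since x^12 + a x^6 + b is irreducible;
   hence -3d is a square and d < 0.  The splitting field of x^4 + a x^2 + b
   contains sqrt(d) and sqrt(b); as d < 0 < b, sqrt(d b) is irrational, so
   sqrt(b) is rational.  For a root x with s x <> +-x, x * s x is then a
   rational square root of b, fixed by s, which forces s (s x) = x: the Galois
   group has exponent dividing 2, whereas 4T1 contains a 4-cycle. *)

Section SquareCovered.
Local Open Scope group_scope.
Variable gT : finGroupType.
Implicit Types (G : {set gT}) (x g k : gT).

Definition square_covered G : Prop :=
  exists2 x, x \in G &
    forall g, g \in G -> exists2 k, k \in G & g = k ^+ 2 \/ g = x * k ^+ 2.

Lemma square_coveredJ G y : square_covered G -> square_covered (G :^ y).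
Proof.
case=> x Gx covG; exists (x ^ y); first by rewrite memJ_conjg.
move=> g; rewrite mem_conjg => /covG[k Gk Dg]; exists (k ^ y).
  by rewrite memJ_conjg.
rewrite -[g](conjgKV y) -conjXg -conjMg.
by case: Dg => ->; [left | right].
Qed.

Lemma cycle_square_covered x : square_covered <[x]>.
Proof.
exists x; first exact: cycle_id.
move=> _ /cycleP[i ->]; exists (x ^+ i./2); first exact: mem_cycle.
have -> : x ^+ i = x ^+ odd i * (x ^+ i./2) ^+ 2.
  by rewrite -expgM -expgD muln2 odd_double_half.
by case: (odd i); [right | left; rewrite mul1g].
Qed.

Lemma square_covered_cubes (G : {group gT}) x :
  x \in G -> (forall g, g \in G -> g ^+ 3 = 1 \/ (x^-1 * g) ^+ 3 = 1) ->
  square_covered G.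
Proof.
move=> Gx cubes.
have sqr_cube (h : gT) : h ^+ 3 = 1 -> h = (h ^+ 2) ^+ 2.
  by move=> h3; rewrite -expgM -[(2 * 2)%N]/(1 + 3)%N expgD h3 mulg1 expg1.
exists x => // g Gg; case: (cubes g Gg) => [/sqr_cube Dg | /sqr_cube Dxg].
  by exists (g ^+ 2); [rewrite groupX | left].
exists ((x^-1 * g) ^+ 2); first by rewrite groupX ?groupM ?groupV.
by right; rewrite -Dxg mulKVg.
Qed.

End SquareCovered.

Lemma square_covered_conjS n (G T : {set 'S_n}) :
  conjS G T -> square_covered T -> square_covered G.
Proof. by case=> y <- /(square_coveredJ y^-1); rewrite conjsgK. Qed.

(* Composition of permutations does not reduce by computation, so finite
   checks on explicit subgroups of 'S_n.+1 are done on the lists of images. *)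
Section PermSeq.
Local Open Scope group_scope.
Variable n : nat.
Implicit Types (s t : 'S_n.+1) (l : seq nat) (Ls : seq (seq nat)).

Definition perm_seq s : seq nat := [seq val (s (inord i)) | i <- iota 0 n.+1].

Definition seq_comp l1 l2 : seq nat := [seq nth 0%N l2 i | i <- l1].

Lemma nth_perm_seq s (i : 'I_n.+1) : nth 0%N (perm_seq s) i = s i.
Proof. by rewrite (nth_map 0%N) ?size_iota // nth_iota // add0n inord_val. Qed.

Lemma perm_seq_inj : injective perm_seq.
Proof. by move=> s t st; apply/permP => i; apply/val_inj; rewrite /= -!nth_perm_seq st. Qed.

Lemma perm_seqM s t : perm_seq (s * t) = seq_comp (perm_seq s) (perm_seq t).
Proof.
rewrite /seq_comp -map_comp; apply/eq_in_map => i; rewrite mem_iota => /andP[_ lt_i].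
by rewrite /= permM nth_perm_seq.
Qed.

Lemma perm_seq1 : perm_seq 1 = iota 0 n.+1.
Proof.
rewrite -[RHS]map_id; apply/eq_in_map => i; rewrite mem_iota => /andP[_ lt_i].
by rewrite /= perm1 inordK.
Qed.

Lemma perm_seq_lperm l :
  size l = n.+1 -> uniq l -> all (leq^~ n) l -> perm_seq (lperm n l) = l.
Proof.
move=> size_l uniq_l lt_l; have lt_nth i : (i < n.+1)%N -> (nth 0%N l i < n.+1)%N.
  by move=> lt_i; apply: (allP lt_l); rewrite mem_nth ?size_l.
have inj_l : injectiveb [ffun i : 'I_n.+1 => (inord (nth 0%N l i) : 'I_n.+1)].
  apply/injectiveP => i j; rewrite !ffunE => /(congr1 val).
  by rewrite /= !inordK ?lt_nth // => /eqP; rewrite nth_uniq ?size_l // => /eqP/val_inj.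
rewrite -[RHS](mkseq_nth 0%N) size_l; apply/eq_in_map => i.
rewrite mem_iota add0n => /andP[_ lt_i].
by rewrite /lperm -pvalE insubdK // ffunE /= inordK ?lt_nth ?ltn_ord // inordK.
Qed.

Definition seq_perms Ls : {set 'S_n.+1} := [set s | perm_seq s \in Ls].

Definition seq_group Ls : bool :=
  (iota 0 n.+1 \in Ls) && all (fun l1 => all (fun l2 => seq_comp l1 l2 \in Ls) Ls) Ls.

Lemma seq_perms_group Ls : seq_group Ls -> group_set (seq_perms Ls).
Proof.
case/andP=> Ls1 /allP closedLs; apply/group_setP; split; first by rewrite inE perm_seq1.
move=> s t; rewrite !inE perm_seqM => Ls_s Ls_t.
exact: (allP (closedLs _ Ls_s)).
Qed.

Lemma gen_sub_seq_perms Ls (A : {set 'S_n.+1}) :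
  seq_group Ls -> A \subset seq_perms Ls -> <<A>> \subset seq_perms Ls.
Proof.
move=> groupLs; pose S := Group (seq_perms_group groupLs).
by rewrite -[seq_perms Ls]/(gval S) gen_subG.
Qed.

Definition seq_cube l := seq_comp l (seq_comp l l).

Lemma perm_seqX3 s : perm_seq (s ^+ 3) = seq_cube (perm_seq s).
Proof. by rewrite expgS expg2 !perm_seqM. Qed.

Lemma seq_perms_cubes Ls (G : {set 'S_n.+1}) (x : 'S_n.+1) :
    G \subset seq_perms Ls -> x * x = 1 ->
    all (fun l => (seq_cube l == iota 0 n.+1) ||
                  (seq_cube (seq_comp (perm_seq x) l) == iota 0 n.+1)) Ls ->
  forall g, g \in G -> g ^+ 3 = 1 \/ (x^-1 * g) ^+ 3 = 1.
Proof.
move=> sGLs xx /allP cubes g Gg; have := subsetP sGLs g Gg; rewrite inE => /cubes.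
have invx : x^-1 = x by apply/eqP; rewrite eq_invg_mul xx.
rewrite -perm_seqM -!perm_seqX3 -perm_seq1 invx.
by case/orP => /eqP/perm_seq_inj; [left | right].
Qed.

End PermSeq.

Arguments perm_seq_inj {n}.

Definition T6_2_seqs : seq (seq nat) :=
  [:: [:: 0; 1; 2; 3; 4; 5]; [:: 1; 0; 3; 2; 5; 4]; [:: 2; 5; 4; 1; 0; 3];
      [:: 3; 4; 5; 0; 1; 2]; [:: 4; 3; 0; 5; 2; 1]; [:: 5; 2; 1; 4; 3; 0]]%N.

Definition T6_5_seqs : seq (seq nat) :=
  [:: [:: 0; 1; 2; 3; 4; 5]; [:: 0; 3; 2; 5; 4; 1]; [:: 0; 5; 2; 1; 4; 3];
      [:: 1; 0; 3; 2; 5; 4]; [:: 1; 2; 3; 4; 5; 0]; [:: 1; 4; 3; 0; 5; 2];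
      [:: 2; 1; 4; 3; 0; 5]; [:: 2; 3; 4; 5; 0; 1]; [:: 2; 5; 4; 1; 0; 3];
      [:: 3; 0; 5; 2; 1; 4]; [:: 3; 2; 5; 4; 1; 0]; [:: 3; 4; 5; 0; 1; 2];
      [:: 4; 1; 0; 3; 2; 5]; [:: 4; 3; 0; 5; 2; 1]; [:: 4; 5; 0; 1; 2; 3];
      [:: 5; 0; 1; 2; 3; 4]; [:: 5; 2; 1; 4; 3; 0]; [:: 5; 4; 1; 0; 3; 2]]%N.

Definition swap6 : 'S_6 := lperm 5 [:: 1; 0; 3; 2; 5; 4]%N.

Lemma swap6_invol : (swap6 * swap6 = 1)%g.
Proof. by apply: perm_seq_inj; rewrite perm_seqM perm_seq_lperm // perm_seq1. Qed.

Lemma square_covered_T6_2 : square_covered T6_2.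
Proof.
have sub : T6_2 \subset seq_perms 5 T6_2_seqs.
  apply: gen_sub_seq_perms => //; apply/subsetP => s.
  by rewrite !inE => /orP[] /eqP ->; rewrite perm_seq_lperm.
apply: (square_covered_cubes (G := <<_>>%G) (x := swap6)).
  by rewrite mem_gen // !inE eqxx orbT.
by apply: seq_perms_cubes sub swap6_invol _; rewrite perm_seq_lperm.
Qed.

Lemma square_covered_T6_5 : square_covered T6_5.
Proof.
have sub : T6_5 \subset seq_perms 5 T6_5_seqs.
  apply: gen_sub_seq_perms => //; apply/subsetP => s.
  by rewrite !inE => /orP[/orP[] | ] /eqP ->; rewrite perm_seq_lperm.
apply: (square_covered_cubes (G := <<_>>%G) (x := swap6)).
  by rewrite mem_gen // !inE eqxx !orbT.
by apply: seq_perms_cubes sub swap6_invol _; rewrite perm_seq_lperm.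
Qed.

Lemma exponent_T4_1 : ~~ (exponent T4_1 %| 2)%N.
Proof.
apply/exponentP => /(_ _ (cycle_id _))/eqP; apply/negP.
by rewrite expg2 -(inj_eq perm_seq_inj) perm_seqM perm_seq_lperm ?perm_seq1.
Qed.

Lemma dvdp_prod_XsubC_root (R : idomainType) (rs : seq R) (q : {poly R}) :
  q %| \prod_(z <- rs) ('X - z%:P) -> (1 < size q)%N -> exists2 x, x \in rs & root q x.
Proof.
move=> dvd_q size_q; have [m Dq] := dvdp_prod_XsubC dvd_q.
case Dm: (mask m rs) Dq => [|x rs'] Dq.
  by move: size_q; rewrite (eqp_size Dq) big_nil size_poly1.
exists x; first by apply: (mem_mask (m := m)); rewrite Dm mem_head.
by rewrite (eqp_root Dq) root_prod_XsubC mem_head.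
Qed.

Section SplittingRoots.
Variables (L : splittingFieldType rat) (E : {subfield L}) (p : {poly rat}).
Variables (k : nat) (rs : k.-tuple L).
Hypothesis splitE : splittingFieldFor 1%VS (map_poly (in_alg L) p) E.
Hypothesis rootsE : roots_of p rs.
Local Notation pL := (map_poly (in_alg L) p).
Local Notation Gal := 'Gal(E / 1%VS)%g.

Lemma root_roots x : root pL x = (x \in rs).
Proof. by case: rootsE => _ ->; rewrite root_prod_XsubC. Qed.

Lemma roots_dvdp q : q %| pL -> (1 < size q)%N -> exists2 x, x \in rs & root q x.
Proof. by case: rootsE => _ ->; apply: dvdp_prod_XsubC_root. Qed.

Lemma tnth_roots_inj : injective (tnth rs).
Proof.
move=> i j; rewrite !(tnth_nth 0) => /eqP.
by case: rootsE => uniq_rs _; rewrite nth_uniq ?size_tuple // => /eqP/val_inj.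
Qed.

Lemma adjoin_roots : <<1 & rs>>%VS = E.
Proof.
case: splitE => rs' Dp <-; have mem_rs' x : (x \in rs') = (x \in rs).
  by rewrite -root_prod_XsubC -(eqp_root Dp) root_roots.
by apply/eqP; rewrite eqEsubv !adjoin_seqSr // => x; rewrite mem_rs'.
Qed.

Lemma roots_in_E : {subset rs <= E}.
Proof. by rewrite -adjoin_roots; apply: seqv_sub_adjoin. Qed.

Lemma galois_roots : galois 1 E.
Proof.
apply/splitting_galoisField; exists pL; split => //; first by apply/polyOver1P; exists p.
by case: rootsE => uniq_rs ->; rewrite separable_prod_XsubC.
Qed.

Lemma gal_roots (s : gal_of E) x : s \in Gal -> x \in rs -> s x \in rs.
Proof.
move=> galEs; rewrite -!root_roots => /rootP px0; apply/rootP.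
have pL_over1 : pL \is a polyOver 1%VS by apply/polyOver1P; exists p.
by rewrite -(fixedPoly_gal (sub1v E) galEs pL_over1) horner_map /= px0 rmorph0.
Qed.

Lemma gal_eq_on_roots (s t : gal_of E) : {in rs, s =1 t} -> s = t.
Proof.
move=> eq_st; apply/eqP/gal_eqP => a Ea; pose r := (s * t^-1)%g.
have fix_r : (E <= fixedField [set r])%VS.
  rewrite -{1}adjoin_roots; apply/Fadjoin_seqP; split; first exact: sub1v.
  move=> x rs_x; apply/fixedFieldP; first exact: roots_in_E.
  move=> _ /set1P ->; have Ex := roots_in_E rs_x.
  by rewrite galM // eq_st // -galM // mulgV gal_id.
have /mem_fixedFieldP[_ fixEr] := subvP fix_r a Ea.
by rewrite -{1}(mulgKV t s) galM // fixEr ?set11.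
Qed.

Definition gal_induces (s : gal_of E) (g : 'S_k) : Prop :=
  s \in Gal /\ forall i, s (tnth rs i) = tnth rs (g i).

Lemma galPermP g : reflect (exists s, gal_induces s g) (g \in galPerm E rs).
Proof.
rewrite inE; apply: (iffP existsP) => [[s /andP[galEs /forallP Ds]] | [s [galEs Ds]]].
  by exists s; split => // i; apply/eqP.
by exists s; rewrite galEs; apply/forallP => i; rewrite Ds.
Qed.

Lemma gal_induces_exists s : s \in Gal -> exists g, gal_induces s g.
Proof.
move=> galEs; pose f i := odflt i [pick j | tnth rs j == s (tnth rs i)].
have Df i : tnth rs (f i) = s (tnth rs i).
  rewrite /f; case: pickP => [j /eqP // | no_j].
  have /tnthP[j Dj] := gal_roots galEs (mem_tnth i rs).
  by have := no_j j; rewrite Dj eqxx.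
have inj_f : injective f.
  by move=> i j /(congr1 (tnth rs)); rewrite !Df => /fmorph_inj/tnth_roots_inj.
by exists (perm inj_f); split => // i; rewrite permE Df.
Qed.

Lemma gal_inducesM s t g h :
  gal_induces s g -> gal_induces t h -> gal_induces (s * t)%g (g * h)%g.
Proof.
case=> galEs Ds [galEt Dt]; split; first by rewrite groupM.
by move=> i; rewrite galM ?roots_in_E ?mem_tnth // Ds Dt permM.
Qed.

Lemma gal_induces_inj s t g : gal_induces s g -> gal_induces t g -> s = t.
Proof.
by case=> _ Ds [_ Dt]; apply: gal_eq_on_roots => _ /tnthP[i ->]; rewrite Ds Dt.
Qed.

Lemma square_covered_gal : square_covered (galPerm E rs) -> square_covered Gal.
Proof.
case=> x /galPermP[u ind_u] covG; exists u; first by case: ind_u.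
move=> s galEs; have [g ind_s] := gal_induces_exists galEs.
have /covG[y /galPermP[t ind_t] Dg] : g \in galPerm E rs by apply/galPermP; exists s.
exists t; first by case: ind_t.
have ind_t2 : gal_induces (t ^+ 2)%g (y ^+ 2)%g by rewrite !expg2; apply: gal_inducesM.
case: Dg => Dg; [left | right]; apply: (gal_induces_inj ind_s); rewrite Dg //.
exact: gal_inducesM.
Qed.

Lemma galPerm_exponent_dvd2 :
    (forall s, s \in Gal -> {in rs, forall x, s (s x) = x}) ->
  (exponent (galPerm E rs) %| 2)%N.
Proof.
move=> invol; apply/exponentP => g /galPermP[s [galEs Ds]].
apply/permP => i; apply: tnth_roots_inj.
by rewrite expg2 perm1 permM -!Ds invol ?mem_tnth.
Qed.

End SplittingRoots.

Section QuadraticCharacter.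
Variables (F : fieldType) (L : splittingFieldType F) (E : {subfield L}).
Hypotheses (galE : galois 1 E) (covE : square_covered 'Gal(E / 1%VS)%g).

Lemma gal_sqrt_sign (s : gal_of E) u : u ^+ 2 \in 1%VS -> s u = u \/ s u = - u.
Proof.
case/vlineP => c Du2; have fix_c : s c%:A = c%:A by rewrite linearZ /= rmorph1.
have : s u ^+ 2 = u ^+ 2 by rewrite -rmorphXn Du2; exact: fix_c.
by move/eqP; rewrite eqf_sqr => /orP[] /eqP; [left | right].
Qed.

Lemma gal_sqr_fix (s : gal_of E) u : u \in E -> u ^+ 2 \in 1%VS -> (s ^+ 2)%g u = u.
Proof.
move=> Eu u2; rewrite expg2 galM //.
have sN : s (- u) = - s u by exact: raddfN.
by case: (gal_sqrt_sign s u2) => Dsu; rewrite !Dsu // sN Dsu opprK.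
Qed.

Lemma gal_moves u : u \in E -> u \notin 1%VS -> exists2 s, s \in 'Gal(E / 1%VS)%g & s u != u.
Proof.
move=> Eu u1; apply/exists_inP; apply: contraR u1 => /exists_inPn fix_u.
rewrite -(galois_fixedField galE); apply/fixedFieldP => // s /fix_u.
by rewrite negbK => /eqP.
Qed.

Lemma mulr_sqrt_mem1 u v :
    u \in E -> v \in E -> u ^+ 2 \in 1%VS -> v ^+ 2 \in 1%VS ->
  u \notin 1%VS -> v \notin 1%VS -> u * v \in 1%VS.
Proof.
move=> Eu Ev u2 v2 u1 v1; have [x galEx covG] := covE.
have xN w : w \in E -> w ^+ 2 \in 1%VS -> w \notin 1%VS -> x w = - w.
  move=> Ew w2 w1; have [s galEs sw] := gal_moves Ew w1.
  have [k _ [Ds | Ds]] := covG s galEs; first by rewrite Ds gal_sqr_fix ?eqxx in sw.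
  case: (gal_sqrt_sign x w2) => // xw.
  by move: sw; rewrite Ds galM // xw gal_sqr_fix ?eqxx.
rewrite -(galois_fixedField galE); apply/fixedFieldP; first by rewrite rpredM.
move=> s galEs; have [k _ [-> | ->]] := covG s galEs.
  by rewrite rmorphM /= !gal_sqr_fix.
by rewrite galM ?rpredM // rmorphM /= !xN // mulrNN rmorphM /= !gal_sqr_fix.
Qed.

End QuadraticCharacter.

Lemma sqr_mem1 (F : fieldType) (L : fieldExtType F) (x : L) (c : F) :
  x \in 1%VS -> x ^+ 2 = c%:A -> exists t : F, t ^+ 2 = c.
Proof.
by case/vlineP => t -> Dc; exists t; apply: (fmorph_inj (in_alg L)); rewrite rmorphXn.
Qed.

Lemma sqr_twice_root_add (R : comPzRingType) (a b y : R) :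
  y ^+ 2 + a * y + b = 0 -> (2 * y + a) ^+ 2 = a ^+ 2 - 4 * b.
Proof.
move=> Dy; transitivity (a ^+ 2 - 4 * b + 4 * (y ^+ 2 + a * y + b)); first by ring.
by rewrite Dy mulr0 addr0.
Qed.

Lemma mul_quadratic_roots (R : idomainType) (a b y z : R) :
  y != z -> y ^+ 2 + a * y + b = 0 -> z ^+ 2 + a * z + b = 0 -> y * z = b.
Proof.
move=> neq_yz Dy Dz.
have : (y - z) * (y + z + a) = 0.
  transitivity ((y ^+ 2 + a * y + b) - (z ^+ 2 + a * z + b)); first by ring.
  by rewrite Dy Dz subrr.
move/eqP; rewrite mulf_eq0 subr_eq0 (negbTE neq_yz) => /eqP Dyz.
transitivity (b + y * (y + z + a) - (y ^+ 2 + a * y + b)); first by ring.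
by rewrite Dyz Dy mulr0 addr0 subr0.
Qed.

Lemma map_trinomial (R S : nzRingType) (f : {rmorphism R -> S}) m n (a b : R) :
  map_poly f ('X^m + a *: 'X^n + b%:P) = 'X^m + f a *: 'X^n + (f b)%:P.
Proof. by rewrite !rmorphD /= map_polyZ !map_polyXn map_polyC. Qed.

Lemma trinomial_factor (R : comNzRingType) n (a b c : R) :
    c ^+ 2 + a * c + b = 0 ->
  'X^(n.*2) + a *: 'X^n + b%:P = ('X^n - c%:P) * ('X^n + (a + c)%:P).
Proof.
move=> Dc; have Db : b = - (c ^+ 2 + a * c) by apply/eqP; rewrite -addr_eq0 addrC Dc.
by rewrite Db -mul_polyC -addnn exprD !(rmorphN, rmorphD, rmorphM) /=; ring.
Qed.

Lemma disc_nonsq_of_irreducible (F : numFieldType) n (a b : F) :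
    (0 < n)%N -> irreducible_poly ('X^(n.*2) + a *: 'X^n + b%:P) ->
  forall r, r ^+ 2 != a ^+ 2 - 4 * b.
Proof.
move=> n_gt0 [_ irr_p] r; apply/eqP => Dr; pose c := (r - a) / 2.
have Dc : c ^+ 2 + a * c + b = 0.
  transitivity ((r ^+ 2 - (a ^+ 2 - 4 * b)) / 4); first by rewrite /c; field.
  by rewrite Dr subrr mul0r.
have size_Xn e : size ('X^n + e%:P : {poly F}) = n.+1 by rewrite size_XnaddC.
have size_q : size ('X^n - c%:P : {poly F}) = n.+1 by rewrite size_XnsubC.
have /eqp_size : 'X^n - c%:P %= 'X^(n.*2) + a *: 'X^n + b%:P.
  apply: irr_p; first by rewrite size_q eqSS -lt0n.
  by rewrite (trinomial_factor n Dc) dvdp_mulIl.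
rewrite (trinomial_factor n Dc) size_mul -?size_poly_eq0 ?size_q ?size_Xn //.
rewrite addSn /= -{1}[n.+1]add0n => /eqP; rewrite eqn_add2r => /eqP n0.
by rewrite -n0 in n_gt0.
Qed.

Lemma size_quadratic (R : nzRingType) (c e : R) : size ('X^2 + c *: 'X + e%:P) = 3.
Proof.
rewrite -addrA size_polyDl size_polyXn // (leq_ltn_trans (size_polyD _ _)) //.
rewrite gtn_max (leq_ltn_trans (size_scale_leq _ _)) ?size_polyX //.
exact: leq_ltn_trans (size_polyC_leq1 _) _.
Qed.

Lemma sqr_twice_root_add_alg (F : fieldType) (L : fieldExtType F) (a b : F) (y : L) :
  y ^+ 2 + a%:A * y + b%:A = 0 -> (2 * y + a%:A) ^+ 2 = (a ^+ 2 - 4 * b)%:A.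
Proof.
move/sqr_twice_root_add ->; rewrite -[RHS]/(in_alg L _).
by rewrite rmorphB rmorphXn rmorphM rmorph_nat.
Qed.

Lemma root_trinomial (L : splittingFieldType rat) m n (a b : rat) k (rs : k.-tuple L) x :
  roots_of ('X^m + a *: 'X^n + b%:P) rs -> x \in rs -> x ^+ m + a%:A * x ^+ n + b%:A = 0.
Proof.
case=> _ Dp; rewrite -root_prod_XsubC -Dp map_trinomial => /rootP.
by rewrite !hornerE.
Qed.

Section TrinomialDiscriminant.
Variables (a b : rat).
Hypothesis disc_nonsq : forall r : rat, r ^+ 2 != a ^+ 2 - 4 * b.
Local Notation d := (a ^+ 2 - 4 * b).

Lemma disc_nonsq_b_neq0 : b != 0.
Proof. by apply: contra (disc_nonsq a) => /eqP->; rewrite mulr0 subr0. Qed.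

Lemma sqrt_disc_notin1 (L : fieldExtType rat) (v : L) : v ^+ 2 = d%:A -> v \notin 1%VS.
Proof. by move=> Dv; apply/negP => /sqr_mem1/(_ Dv)[t /eqP]; apply/negP. Qed.

Lemma sextic_disc_lt0 (L : splittingFieldType rat) (E : {subfield L}) (rs : 6.-tuple L) :
    splittingFieldFor 1%VS (map_poly (in_alg L) ('X^6 + a *: 'X^3 + b%:P)) E ->
    roots_of ('X^6 + a *: 'X^3 + b%:P) rs -> square_covered 'Gal(E / 1%VS)%g ->
  d < 0.
Proof.
move=> splitE rootsE covE; pose g := tnth rs 0.
have Dg : (g ^+ 3) ^+ 2 + a%:A * g ^+ 3 + b%:A = 0.
  by rewrite -exprM; apply: root_trinomial rootsE (mem_tnth _ _).
have nz_g : g != 0.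
  apply: contra disc_nonsq_b_neq0 => /eqP g0; move: Dg.
  by rewrite g0 !expr0n /= mulr0 !add0r => /eqP; rewrite scaler_eq0 oner_eq0 orbF.
have [z rs_z] : exists2 z, z \in rs & root ('X^2 + g *: 'X + (g ^+ 2)%:P) z.
  apply: (roots_dvdp rootsE); last by rewrite size_quadratic.
  rewrite map_trinomial (trinomial_factor 3 Dg).
  have -> : 'X^3 - (g ^+ 3)%:P = ('X^2 + g *: 'X + (g ^+ 2)%:P) * ('X - g%:P).
    by rewrite -mul_polyC rmorphXn; ring.
  by rewrite -mulrA dvdp_mulIl.
move/rootP; rewrite !hornerE => Dz.
(* z / g is a primitive cube root of unity u, and w = 2 u + 1 squares to -3. *)
pose w := (2 * z + g) / g; pose v := 2 * g ^+ 3 + a%:A.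
have Dw : w ^+ 2 = (-3 : rat)%:A.
  rewrite expr_div_n (sqr_twice_root_add Dz).
  by rewrite -[RHS]/(in_alg L _) rmorphN rmorph_nat; field.
have Dv : v ^+ 2 = d%:A by apply: sqr_twice_root_add_alg.
have Eg : g \in E by apply: roots_in_E splitE rootsE _ (mem_tnth _ _).
have Ez : z \in E by apply: roots_in_E splitE rootsE _ rs_z.
have Ew : w \in E by rewrite rpredM ?rpredV ?rpredD ?rpredM ?rpred_nat.
have Ev : v \in E by rewrite rpredD ?rpredM ?rpredX ?rpred_nat ?memvZ ?mem1v.
have w1 : w \notin 1%VS.
  by apply/negP => /sqr_mem1/(_ Dw)[t Dt]; have := sqr_ge0 t; rewrite Dt; lra.
have wv1 := mulr_sqrt_mem1 (galois_roots splitE rootsE) covE Ew Ev.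
have [t Dt] : exists t : rat, t ^+ 2 = -3 * d.
  apply: (sqr_mem1 (wv1 _ _ w1 (sqrt_disc_notin1 Dv))); rewrite ?Dw ?Dv ?rpredZ ?mem1v //.
  by rewrite exprMn Dw Dv mulr_algl scalerA.
have d_neq0 : d != 0 by rewrite eq_sym -(mulr0 0) -expr2 disc_nonsq.
by rewrite lt_def eq_sym d_neq0 /=; have := sqr_ge0 t; rewrite Dt; lra.
Qed.

Lemma quartic_sqrt_b (L : splittingFieldType rat) (E : {subfield L}) (rs : 4.-tuple L) :
    splittingFieldFor 1%VS (map_poly (in_alg L) ('X^4 + a *: 'X^2 + b%:P)) E ->
    roots_of ('X^4 + a *: 'X^2 + b%:P) rs ->
  exists2 z, z \in E & z ^+ 2 = b%:A.
Proof.
move=> splitE rootsE; pose g := tnth rs 0.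
have Dg : (g ^+ 2) ^+ 2 + a%:A * g ^+ 2 + b%:A = 0.
  by rewrite -exprM; apply: root_trinomial rootsE (mem_tnth _ _).
have [y rs_y] : exists2 y, y \in rs & root ('X^2 + (a%:A + g ^+ 2)%:P) y.
  apply: (roots_dvdp rootsE); last by rewrite size_XnaddC.
  by rewrite map_trinomial (trinomial_factor 2 Dg) dvdp_mulIr.
move/rootP; rewrite !hornerE => Dy; exists (g * y).
  by rewrite rpredM ?(roots_in_E splitE rootsE) ?mem_tnth.
transitivity (b%:A + g ^+ 2 * (y ^+ 2 + a%:A + g ^+ 2)
               - ((g ^+ 2) ^+ 2 + a%:A * g ^+ 2 + b%:A)); first by ring.
by rewrite Dy Dg mulr0 addr0 subr0.
Qed.

Lemma quartic_gal_invol (L : splittingFieldType rat) (E : {subfield L}) (rs : 4.-tuple L)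
    (c : rat) (s : gal_of E) x :
    roots_of ('X^4 + a *: 'X^2 + b%:P) rs -> c ^+ 2 = b ->
  s \in 'Gal(E / 1%VS)%g -> x \in rs -> s (s x) = x.
Proof.
move=> rootsE Dc galEs rs_x; have rs_sx := gal_roots rootsE galEs rs_x.
have rootsq y : y \in rs -> (y ^+ 2) ^+ 2 + a%:A * y ^+ 2 + b%:A = 0.
  by move=> rs_y; rewrite -exprM; apply: root_trinomial rootsE rs_y.
have sN : s (- x) = - s x by exact: raddfN.
have [/eqP | neq_sq] := eqVneq (s x ^+ 2) (x ^+ 2).
  by rewrite eqf_sqr => /orP[] /eqP Dsx; rewrite {1}Dsx ?sN Dsx ?opprK.
have Dxsx : x * s x \in 1%VS.
  have := mul_quadratic_roots neq_sq (rootsq _ rs_sx) (rootsq _ rs_x).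
  rewrite -exprMn -Dc -[(c ^+ 2)%:A]/(in_alg L _) rmorphXn => /eqP.
  by rewrite mulrC eqf_sqr => /orP[] /eqP ->; rewrite ?rpredN memvZ ?mem1v.
have nz_sx : s x != 0.
  apply: contra disc_nonsq_b_neq0 => /eqP sx0; move: (rootsq _ rs_sx).
  by rewrite sx0 !expr0n /= mulr0 !add0r => /eqP; rewrite scaler_eq0 oner_eq0 orbF.
apply: (mulfI nz_sx); rewrite -rmorphM (mulrC (s x)).
exact: fixed_gal (sub1v E) galEs Dxsx.
Qed.

Lemma quartic_exponent_dvd2 (L : splittingFieldType rat) (E : {subfield L}) (rs : 4.-tuple L) :
    splittingFieldFor 1%VS (map_poly (in_alg L) ('X^4 + a *: 'X^2 + b%:P)) E ->
    roots_of ('X^4 + a *: 'X^2 + b%:P) rs -> square_covered 'Gal(E / 1%VS)%g ->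
  d < 0 -> (exponent (galPerm E rs) %| 2)%N.
Proof.
move=> splitE rootsE covE d_lt0.
have b_gt0 : 0 < b by have := sqr_ge0 a; lra.
have [c Dc] : exists c : rat, c ^+ 2 = b.
  have [z Ez Dz] := quartic_sqrt_b splitE rootsE.
  have [z1 | z1] := boolP (z \in 1%VS); first exact: sqr_mem1 z1 Dz.
  pose v := 2 * tnth rs 0 ^+ 2 + a%:A.
  have Dv : v ^+ 2 = d%:A.
    apply: sqr_twice_root_add_alg; rewrite -exprM.
    exact: root_trinomial rootsE (mem_tnth _ _).
  have Eg : tnth rs 0 \in E by apply: roots_in_E splitE rootsE _ (mem_tnth _ _).
  have Ev : v \in E by rewrite rpredD ?rpredM ?rpredX ?rpred_nat ?memvZ ?mem1v.
  have vz1 := mulr_sqrt_mem1 (galois_roots splitE rootsE) covE Ev Ez.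
  have [t Dt] : exists t : rat, t ^+ 2 = d * b.
    apply: (sqr_mem1 (vz1 _ _ (sqrt_disc_notin1 Dv) z1)); rewrite ?Dv ?Dz ?memvZ ?mem1v //.
    by rewrite exprMn Dv Dz mulr_algl scalerA.
  have : d * b < 0 by rewrite mulrC pmulr_rlt0.
  by have := sqr_ge0 t; rewrite Dt; lra.
apply: (galPerm_exponent_dvd2 rootsE) => s galEs x rs_x.
exact: quartic_gal_invol rootsE Dc galEs rs_x.
Qed.

End TrinomialDiscriminant.

Theorem lemma3p4 (a b : rat)
  (Hirr : irreducible_poly ('X^12 + a *: 'X^6 + b%:P : {poly rat}))
  (L4 : splittingFieldType rat) (E4 : {subfield L4}) (rs4 : 4.-tuple L4)
  (Hsplit4 : splittingFieldFor 1%VS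
               (map_poly (in_alg L4) ('X^4 + a *: 'X^2 + b%:P)) E4)
  (Hroots4 : roots_of ('X^4 + a *: 'X^2 + b%:P) rs4)
  (L6 : splittingFieldType rat) (E6 : {subfield L6}) (rs6 : 6.-tuple L6)
  (Hsplit6 : splittingFieldFor 1%VS
               (map_poly (in_alg L6) ('X^6 + a *: 'X^3 + b%:P)) E6)
  (Hroots6 : roots_of ('X^6 + a *: 'X^3 + b%:P) rs6) :
  ~ (conjS (galPerm E4 rs4) T4_1 /\
     (conjS (galPerm E6 rs6) T6_1 \/ conjS (galPerm E6 rs6) T6_2 \/
      conjS (galPerm E6 rs6) T6_5)).
Proof.
case=> conj4 conj6; have disc_nonsq := disc_nonsq_of_irreducible (n := 6) isT Hirr.
have cov6 : square_covered 'Gal(E6 / 1%VS)%g.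
  apply: (square_covered_gal Hsplit6 Hroots6).
  case: conj6 => [|[|]] /square_covered_conjS; apply.
  - exact: cycle_square_covered.
  - exact: square_covered_T6_2.
  - exact: square_covered_T6_5.
have cov4 : square_covered 'Gal(E4 / 1%VS)%g.
  exact/(square_covered_gal Hsplit4 Hroots4)/(square_covered_conjS conj4)/cycle_square_covered.
have d_lt0 := sextic_disc_lt0 disc_nonsq Hsplit6 Hroots6 cov6.
have := quartic_exponent_dvd2 disc_nonsq Hsplit4 Hroots4 cov4 d_lt0.
by case: conj4 => y DT; rewrite -(exponentJ _ y) DT (negbTE exponent_T4_1).
Qed.
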